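(* Suppose that $I$ is an ideal over an uncountable cardinal $\kappa$ such that $\mathcal{P}(\kappa)/I$ is complete. For any cardinal $\lambda$, if $I$ is not $\lambda$-saturated, then $2^\lambda\leq 2^\kappa$. In particular: (a) $I$ is $2^\kappa$-saturated; (b) if $2^\kappa<2^{\kappa^+}$, then $I$ is $\kappa^+$-saturated.
   Context: An ideal over $\kappa$ means a proper, $\kappa$-complete ideal on $\mathcal{P}(\kappa)$ containing all singletons. $\mathcal{P}(\kappa)/I$ is the quotient Boolean algebra of classes $[A]_I=\{B: A\triangle B\in I\}$. $I$ is $\lambda$-saturated if whenever $\{X_\alpha:\alpha<\lambda\}\subseteq\mathcal{P}(\kappa)\setminus I$ there are $\alpha<\beta<\lambda$ with $X_\alpha\cap X_\beta\notin I$. *)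

(* Cardinals are represented by types; subsets of kappa by
   predicates K -> Prop; cardinal comparison by existence of injections. *)
From Stdlib Require Import Classical.

Definition injective {A B : Type} (f : A -> B) : Prop :=
  forall x y, f x = f y -> x = y.

Definition card_le (A B : Type) : Prop := exists f : A -> B, injective f.
Definition card_lt (A B : Type) : Prop := card_le A B /\ ~ card_le B A.

Definition uncountable (K : Type) : Prop := ~ card_le K nat.

Definition is_succ_card (K Kp : Type) : Prop :=
  card_lt K Kp /\ forall J : Type, card_lt K J -> card_le Kp J.

Definition setK (K : Type) := K -> Prop.
Definition emptyK {K : Type} : setK K := fun _ => False.
Definition fullK {K : Type} : setK K := fun _ => True.
Definition subK {K : Type} (A B : setK K) : Prop := forall x, A x -> B x.
Definition interK {K : Type} (A B : setK K) : setK K := fun x => A x /\ B x.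
Definition unionK {K : Type} (A B : setK K) : setK K := fun x => A x \/ B x.
Definition diffK {K : Type} (A B : setK K) : setK K := fun x => A x /\ ~ B x.

Definition ideal_over (K : Type) (I : setK K -> Prop) : Prop :=
  I emptyK /\
  (forall A B : setK K, subK A B -> I B -> I A) /\
  (forall A B : setK K, I A -> I B -> I (unionK A B)) /\
  (forall (J : Type) (F : J -> setK K), card_lt J K ->
      (forall j, I (F j)) -> I (fun x => exists j, F j x)) /\
  (forall a : K, I (fun x => x = a)) /\
  ~ I fullK.

(* Order on the quotient P(kappa)/I, on representatives:
   [A]_I <= [B]_I  iff  A \ B in I. *)
Definition le_mod {K : Type} (I : setK K -> Prop) (A B : setK K) : Prop :=
  I (diffK A B).

(* P(kappa)/I is a complete Boolean algebra: every subset of the quotient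
   (given by a set S of representatives) has a least upper bound. *)
Definition quotient_complete {K : Type} (I : setK K -> Prop) : Prop :=
  forall S : setK K -> Prop, exists A : setK K,
    (forall B, S B -> le_mod I B A) /\
    (forall C, (forall B, S B -> le_mod I B C) -> le_mod I A C).

Definition saturated {K : Type} (I : setK K -> Prop) (L : Type) : Prop :=
  forall X : L -> setK K, (forall a, ~ I (X a)) ->
    exists a b : L, a <> b /\ ~ I (interK (X a) (X b)).

(* An antichain {X_a : a in L} of I-positive sets, pairwise disjoint modulo I,
   yields an injection of P(L) into P(kappa)/I and hence into P(kappa): send
   S to the supremum of {[X_a] : a in S}.  If a lies in S but not in T, then
   [X_a] is below the supremum for S but disjoint from every member of T, so
   it cannot lie below the supremum for T. *)
From Stdlib Require Import Classical ClassicalEpsilon FunctionalExtensionality PropExtensionality.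

Lemma cantor (Y : Type) : ~ card_le (Y -> Prop) Y.
Proof.
  intros [f f_inj].
  set (D := fun y => exists S, f S = y /\ ~ S y).
  destruct (classic (D (f D))) as [[S [fS_eq nSy]] | nD].
  - apply f_inj in fS_eq; subst S.
    exact (nSy (ex_intro _ D (conj eq_refl nSy))).
  - exact (nD (ex_intro _ D (conj eq_refl nD))).
Qed.

Definition is_sup_mod {K : Type} (I : setK K -> Prop) (S : setK K -> Prop)
  (A : setK K) : Prop :=
  (forall B, S B -> le_mod I B A) /\
  (forall C, (forall B, S B -> le_mod I B C) -> le_mod I A C).

Definition sup_mod {K : Type} {I : setK K -> Prop} (complete : quotient_complete I)
  (S : setK K -> Prop) : setK K :=
  proj1_sig (constructive_indefinite_description _ (complete S)).

Lemma sup_modP {K : Type} {I : setK K -> Prop} (complete : quotient_complete I)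
  (S : setK K -> Prop) : is_sup_mod I S (sup_mod complete S).
Proof. exact (proj2_sig (constructive_indefinite_description _ (complete S))). Qed.

Section QuotientOrder.

Variables (K : Type) (I : setK K -> Prop).
Hypothesis I_sub : forall A B : setK K, subK A B -> I B -> I A.
Hypothesis I_union : forall A B : setK K, I A -> I B -> I (unionK A B).

Lemma le_mod_trans (A B C : setK K) :
  le_mod I A B -> le_mod I B C -> le_mod I A C.
Proof.
  intros AB BC; refine (I_sub _ _ _ (I_union _ _ AB BC)).
  intros x [Ax nCx]; destruct (classic (B x)); [right | left]; split; auto.
Qed.

Lemma le_mod_diffK_of_disjoint (A B X : setK K) :
  I (interK X B) -> le_mod I B A -> le_mod I B (diffK A X).
Proof.
  intros XB BA; refine (I_sub _ _ _ (I_union _ _ BA XB)).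
  intros x [Bx nx]; destruct (classic (A x)) as [Ax | nAx].
  - right; split; [apply NNPP; intro nXx; exact (nx (conj Ax nXx)) | exact Bx].
  - left; split; assumption.
Qed.

Lemma le_mod_diffK_self (A X : setK K) : le_mod I X (diffK A X) -> I X.
Proof. apply I_sub; intros x Xx; split; [exact Xx | intros [_ nXx]; exact (nXx Xx)]. Qed.

(* A \ X is an upper bound of S, so the supremum A lies below it. *)
Lemma null_of_le_sup_disjoint (S : setK K -> Prop) (A X : setK K) :
  is_sup_mod I S A -> (forall B, S B -> I (interK X B)) ->
  le_mod I X A -> I X.
Proof.
  intros [A_ub A_least] X_disj XA.
  apply (le_mod_diffK_self A).
  apply (le_mod_trans _ A _ XA), A_least.
  intros B SB; exact (le_mod_diffK_of_disjoint _ _ _ (X_disj B SB) (A_ub B SB)).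
Qed.

Variables (L : Type) (X : L -> setK K).
Hypothesis X_pos : forall a, ~ I (X a).
Hypothesis X_disj : forall a b, a <> b -> I (interK (X a) (X b)).

Definition antichain_image (T : L -> Prop) (B : setK K) : Prop :=
  exists a, T a /\ B = X a.

Lemma antichain_sup_sub (S T : L -> Prop) (A : setK K) :
  is_sup_mod I (antichain_image S) A -> is_sup_mod I (antichain_image T) A ->
  forall a, S a -> T a.
Proof.
  intros [S_ub _] T_sup a Sa; apply NNPP; intro nTa.
  apply (X_pos a), (null_of_le_sup_disjoint _ _ _ T_sup).
  - intros B [b [Tb ->]]; apply X_disj; intros ->; exact (nTa Tb).
  - apply S_ub; exists a; split; [exact Sa | reflexivity].
Qed.

Lemma antichain_sup_inj (complete : quotient_complete I) :
  injective (fun T => sup_mod complete (antichain_image T)).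
Proof.
  intros S T E; cbn beta in E.
  pose proof (sup_modP complete (antichain_image S)) as S_sup.
  pose proof (sup_modP complete (antichain_image T)) as T_sup.
  rewrite E in S_sup.
  apply functional_extensionality; intro a; apply propositional_extensionality.
  split; apply antichain_sup_sub with (A := sup_mod complete (antichain_image T));
    assumption.
Qed.

End QuotientOrder.

Lemma not_saturated_antichain (K L : Type) (I : setK K -> Prop) :
  ~ saturated I L ->
  exists X : L -> setK K,
    (forall a, ~ I (X a)) /\ (forall a b, a <> b -> I (interK (X a) (X b))).
Proof.
  intros not_sat; apply not_all_ex_not in not_sat as [X HX].
  apply imply_to_and in HX as [X_pos no_pair].
  exists X; split; [exact X_pos |].
  intros a b ab; apply NNPP; intro nI; apply no_pair; exists a, b; auto.
Qed.

Lemma card_le_power_of_not_saturated (K L : Type) (I : setK K -> Prop) :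
  ideal_over K I -> quotient_complete I -> ~ saturated I L ->
  card_le (L -> Prop) (K -> Prop).
Proof.
  intros [_ [I_sub [I_union _]]] complete not_sat.
  destruct (not_saturated_antichain _ _ _ not_sat) as [X [X_pos X_disj]].
  eexists; exact (antichain_sup_inj K I I_sub I_union L X X_pos X_disj complete).
Qed.

Theorem lemma1p1 (K : Type) (I : setK K -> Prop) :
  uncountable K -> ideal_over K I -> quotient_complete I ->
  (forall L : Type, ~ saturated I L -> card_le (L -> Prop) (K -> Prop)) /\
  (* (a) I is 2^kappa-saturated *)
  saturated I (K -> Prop) /\
  (* (b) if 2^kappa < 2^(kappa^+) then I is kappa^+-saturated *)
  (forall Kp : Type, is_succ_card K Kp ->
     card_lt (K -> Prop) (Kp -> Prop) -> saturated I Kp).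
Proof.
  intros _ ideal complete.
  pose proof (fun L => card_le_power_of_not_saturated K L I ideal complete) as main.
  split; [exact main | split].
  - apply NNPP; intro not_sat; exact (cantor _ (main _ not_sat)).
  - intros Kp _ [_ not_le]; apply NNPP; intro not_sat; exact (not_le (main _ not_sat)).
Qed.
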